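(* $\mathrm{uniform}\text{-}\mathrm{FAC}^0\text{-}\textsc{Or} \neq \mathrm{uniform}\text{-}\mathrm{FAC}^0\text{-}\textsc{And}$, i.e. the class of languages decided by $\mathrm{FAC}^0$-uniform families of $\textsc{Or}$ circuits differs from the class of languages decided by $\mathrm{FAC}^0$-uniform families of $\textsc{And}$ circuits.
   Context: A Boolean circuit on $n$ variables $w_0,\dots,w_{n-1}$ is a directed acyclic multigraph whose source gates are labelled by an input variable or by a constant $0$ or $1$, whose other gates are labelled by Boolean functions, and in which one gate is designated the output gate (there may be other sinks). An $\textsc{Or}$ circuit is a circuit whose only gates are input gates, constant gates and (unbounded fan-in) $\textsc{Or}$ gates, one $\textsc{Or}$ gate being the output gate; an $\textsc{And}$ circuit is defined analogously with $\textsc{And}$ gates. $\mathrm{FAC}^0$ is the class of functions $\{0,1\}^*\to\{0,1\}^*$ computable by $\mathrm{DLOGTIME}$-uniform families of constant-depth, polynomial-size circuits with unbounded fan-in $\textsc{And}$/$\textsc{Or}$ gates and fan-in-1 $\textsc{Not}$ gates. A circuit family $(C_n)_{n\in\mathbb N}$ ($C_n$ having $n$ input gates) decides $L\subseteq\{0,1\}^*$ if for every $w\in\{0,1\}^n$, $C_n(w)=1$ iff $w\in L$; it is $\mathrm{FAC}^0$-uniform if the map $1^n\mapsto C_n$ (binary encoding of $C_n$) is in $\mathrm{FAC}^0$. $\mathrm{uniform}\text{-}\mathrm{FAC}^0\text{-}\textsc{Or}$ (resp. $\textsc{And}$) is the set of languages over $\{0,1\}$ decided by $\mathrm{FAC}^0$-uniform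 families of $\textsc{Or}$ (resp. $\textsc{And}$) circuits. *)

From mathcomp Require Import all_boot.
Set Implicit Arguments. Unset Strict Implicit. Unset Printing Implicit Defensive.

(* number of bits of x (bitlen 0 = 1) *)
Definition bitlen (x : nat) : nat := (trunc_log 2 x).+1.

(* the W lowest bits of x, most significant bit first *)
Definition fixbits (W x : nat) : seq bool :=
  [seq odd (x %/ 2 ^ (W - i.+1)) | i <- iota 0 W].

Definition bin_val (s : seq bool) : nat := foldl (fun acc (b : bool) => acc.*2 + b) 0 s.

(* self-delimiting code: every bit doubled, terminated by 01 *)
Definition sdcode (x : nat) : seq bool :=
  flatten [seq [:: b; b] | b <- fixbits (bitlen x) x] ++ [:: false; true].

Inductive gtype := GAnd | GOr | GNot | GConst of bool | GInput of nat.

(* A circuit: gates 0 .. csize-1, gate g has label ctype g and the list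
   (with repetitions: multigraph) of its predecessors cpred g. *)
Record circuit := Circuit {
  csize : nat;
  ctype : nat -> gtype;
  cpred : nat -> seq nat }.

(* Well-formedness for a circuit on n variables w_0..w_{n-1}:
   predecessors have smaller numbers (so the graph is acyclic), source
   gates are exactly the input/constant gates, Not has fan-in 1. *)
Definition wf_gate (n : nat) (C : circuit) (g : nat) : Prop :=
  (forall p, p \in cpred C g -> p < g) /\
  match ctype C g with
  | GInput i => i < n /\ cpred C g = [::]
  | GConst _ => cpred C g = [::]
  | GNot => size (cpred C g) = 1
  | GAnd | GOr => cpred C g != [::]
  end.

Definition wf_circuit (n : nat) (C : circuit) : Prop :=
  forall g, g < csize C -> wf_gate n C g.

Fixpoint gval (C : circuit) (w : seq bool) (fuel g : nat) : bool :=
  match fuel with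
  | 0 => false
  | f.+1 =>
    match ctype C g with
    | GAnd => all (gval C w f) (cpred C g)
    | GOr => has (gval C w f) (cpred C g)
    | GNot => ~~ gval C w f (head 0 (cpred C g))
    | GConst b => b
    | GInput i => nth false w i
    end
  end.

Definition gate_val (C : circuit) (w : seq bool) (g : nat) : bool :=
  gval C w g.+1 g.

Fixpoint gdepth (C : circuit) (fuel g : nat) : nat :=
  match fuel with
  | 0 => 0
  | f.+1 => foldr maxn 0 [seq (gdepth C f p).+1 | p <- cpred C g]
  end.

Definition gate_depth (C : circuit) (g : nat) : nat := gdepth C g.+1 g.

Definition gtype_code (t : gtype) : nat :=
  match t with
  | GAnd => 0 | GOr => 1 | GNot => 2
  | GConst false => 3 | GConst true => 4
  | GInput i => 5 + i
  end.

(* All numbers are written with the same width W (given in unary first):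
   W, size, output gate, then for each gate: type code, fan-in, preds. *)
Definition enc_circuit (Co : circuit * nat) : seq bool :=
  let C := Co.1 in let out := Co.2 in
  let N := foldr maxn 0 ([:: csize C; out] ++
             [seq maxn (gtype_code (ctype C g)) (foldr maxn (size (cpred C g)) (cpred C g))
             | g <- iota 0 (csize C)]) in
  let W := bitlen N in
  let fb := fixbits W in
  nseq W true ++ [:: false] ++ fb (csize C) ++ fb out ++
  flatten [seq fb (gtype_code (ctype C g)) ++ fb (size (cpred C g)) ++
               flatten [seq fb p | p <- cpred C g]
          | g <- iota 0 (csize C)].

Inductive move := MLeft | MStay | MRight.

Definition move_head (m : move) (h : nat) : nat :=
  match m with MLeft => h.-1 | MStay => h | MRight => h.+1 end.

(* Deterministic random-access TM: finitely many states 'I_nstates,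
   work tapes 'I_ntapes.+1 over {0,1,blank} (tape ord0 is the index tape).
   At every step the machine sees the input symbol at the position whose
   binary value (MSB first) is the nonblank prefix of the index tape
   (None if that position is >= the input length), the symbols under its
   heads, and writes/moves on each work tape. *)
Record ratm := RATM {
  nstates : nat;
  ntapes : nat;
  rstart : 'I_nstates;
  racc : 'I_nstates;
  rrej : 'I_nstates;
  rdelta : 'I_nstates -> option bool -> {ffun 'I_ntapes.+1 -> option bool} ->
           'I_nstates * {ffun 'I_ntapes.+1 -> option bool} * {ffun 'I_ntapes.+1 -> move} }.

Record rconf (M : ratm) := RConf {
  cstate : 'I_(nstates M);
  ctapes : 'I_(ntapes M).+1 -> seq (option bool);
  cheads : 'I_(ntapes M).+1 -> nat }.

Fixpoint somes_prefix (s : seq (option bool)) : seq bool :=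
  match s with
  | Some b :: s' => b :: somes_prefix s'
  | _ => [::]
  end.

Definition rinit (M : ratm) : rconf M :=
  @RConf M (rstart M) (fun _ => [::]) (fun _ => 0).

Definition rhalted (M : ratm) (c : rconf M) : bool :=
  (cstate c == racc M) || (cstate c == rrej M).

Definition rstep (M : ratm) (w : seq bool) (c : rconf M) : rconf M :=
  if rhalted c then c else
  let i := bin_val (somes_prefix (ctapes c ord0)) in
  let inp := if i < size w then Some (nth false w i) else None in
  let rd := [ffun t => nth None (ctapes c t) (cheads c t)] in
  let: (q', wr, mv) := rdelta (cstate c) inp rd in
  @RConf M q' (fun t => set_nth None (ctapes c t) (cheads c t) (wr t))
              (fun t => move_head (mv t) (cheads c t)).

Definition rrun (M : ratm) (w : seq bool) (t : nat) : rconf M :=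
  iter t (@rstep M w) (rinit M).

Definition decides_within (M : ratm) (w : seq bool) (T : nat) (P : Prop) : Prop :=
  rhalted (rrun M w T) /\ (cstate (rrun M w T) = racc M <-> P).

(* A multi-output circuit: outputs come in pairs (valid gate, bit gate);
   the output string is the sequence of bit gates along the maximal
   prefix of pairs whose valid gate evaluates to 1. *)
Record mcircuit := MCircuit {
  mc : circuit;
  mouts : seq (nat * nat) }.

Definition mc_output (D : mcircuit) (w : seq bool) : seq bool :=
  let k := find (fun p : nat * nat => ~~ gate_val (mc D) w p.1) (mouts D) in
  [seq gate_val (mc D) w p.2 | p <- take k (mouts D)].

(* direct connection language of D (n = |y|):
   tag 0 : gate a has type code b;   tag 1 : gate b is a predecessor of a;
   tag 2 : the valid gate of output pair a is b;
   tag 3 : the bit gate of output pair a is b. *)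
Definition dc_holds (D : mcircuit) (tag a b : nat) : bool :=
  match tag with
  | 0 => (a < csize (mc D)) && (gtype_code (ctype (mc D) a) == b)
  | 1 => (a < csize (mc D)) && (b \in cpred (mc D) a)
  | 2 => (a < size (mouts D)) && ((nth (0, 0) (mouts D) a).1 == b)
  | 3 => (a < size (mouts D)) && ((nth (0, 0) (mouts D) a).2 == b)
  | _ => false
  end.

Definition dc_word (tag a b : nat) (y : seq bool) : seq bool :=
  sdcode tag ++ sdcode a ++ sdcode b ++ y.

Definition dlogtime_uniform (D : nat -> mcircuit) : Prop :=
  exists (M : ratm) (c : nat), forall tag a b (y : seq bool),
    let w := dc_word tag a b y in
    decides_within M w (c * (trunc_log 2 (size w)).+1)
      (dc_holds (D (size y)) tag a b).

Definition FAC0 (f : seq bool -> seq bool) : Prop :=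
  exists (D : nat -> mcircuit) (c d : nat),
    (forall n, wf_circuit n (mc (D n))) /\
    (forall n, csize (mc (D n)) <= c * n ^ c + c) /\
    (forall n, size (mouts (D n)) <= c * n ^ c + c) /\
    (forall n, all (fun p : nat * nat => (p.1 < csize (mc (D n))) && (p.2 < csize (mc (D n))))
                   (mouts (D n))) /\
    (forall n g, g < csize (mc (D n)) -> gate_depth (mc (D n)) g <= d) /\
    dlogtime_uniform D /\
    (forall w, f w = mc_output (D (size w)) w).

Definition is_or_circuit (Co : circuit * nat) : Prop :=
  (forall g, g < csize Co.1 ->
     match ctype Co.1 g with GInput _ | GConst _ | GOr => True | _ => False end) /\
  ctype Co.1 Co.2 = GOr.

Definition is_and_circuit (Co : circuit * nat) : Prop :=
  (forall g, g < csize Co.1 ->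
     match ctype Co.1 g with GInput _ | GConst _ | GAnd => True | _ => False end) /\
  ctype Co.1 Co.2 = GAnd.

Definition uniform_FAC0_class (K : circuit * nat -> Prop)
  (L : seq bool -> Prop) : Prop :=
  exists C : nat -> circuit * nat,
    (forall n, wf_circuit n (C n).1 /\ (C n).2 < csize (C n).1 /\ K (C n)) /\
    (forall w, gate_val (C (size w)).1 w (C (size w)).2 = true <-> L w) /\
    (exists f, FAC0 f /\ forall n, f (nseq n true) = enc_circuit (C n)).

Definition uniform_FAC0_Or := uniform_FAC0_class is_or_circuit.
Definition uniform_FAC0_And := uniform_FAC0_class is_and_circuit.

From HB Require Import structures.
From mathcomp Require Import all_boot zify.
Set Implicit Arguments. Unset Strict Implicit. Unset Printing Implicit Defensive.

(* The language or01 of words of length at least 2 whose first or second bit is 1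
   separates the two classes.  An And circuit computes a function that commutes with
   bitwise conjunction, f (x && y) = f x && f y, as one sees gate by gate; since or01
   accepts 10 and 01 but rejects 00, no And circuit decides it.  The Or circuits
   w_0 \/ w_1 (and a constant-false Or gate on shorter inputs) do.  Their family has
   only two members, so its encoding on 1^n is the output of an input-free circuit
   family whose direct connection relation holds for finitely many triples only.
   Membership of a word code(tag) code(a) code(b) y in the direct connection language
   therefore depends only on a prefix of bounded length (the three codes and two bits
   of y telling whether |y| > 1), and a random-access machine reads such a prefix in
   constant time by writing the addresses 0, 1, ..., K in turn on its index tape. *)

(** * Binary and self-delimiting codes *)

Lemma size_fixbits W x : size (fixbits W x) = W.
Proof. by rewrite size_map size_iota. Qed.

Lemma fixbitsS W x : fixbits W.+1 x = rcons (fixbits W x./2) (odd x).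
Proof.
rewrite /fixbits -[W.+1]addn1 iotaD map_cat /= cats1 addn1 subnn expn0 divn1.
congr rcons.
apply/eq_in_map => i; rewrite mem_iota add0n => /andP[_ ltiW].
by rewrite -divn2 -divnMA -expnS; congr (odd (_ %/ 2 ^ _)); lia.
Qed.

Lemma fixbitsK W x : x < 2 ^ W -> bin_val (fixbits W x) = x.
Proof.
elim: W x => [|W IHW] x ltx; first by move: ltx; rewrite expn0 ltnS leqn0 => /eqP->.
rewrite fixbitsS /bin_val foldl_rcons -/(bin_val _) IHW; last first.
  by rewrite ltn_half_double -muln2 -expnSr.
by rewrite -{3}(odd_double_half x) addnC.
Qed.

Lemma ltn_bitlen x : x < 2 ^ bitlen x.
Proof. exact: trunc_log_ltn. Qed.

Lemma size_sdcode x : size (sdcode x) = (bitlen x).*2.+2.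
Proof.
rewrite /sdcode size_cat addn2 -[in RHS](size_fixbits (bitlen x) x).
by elim: (fixbits _ _) => //= b s ->; rewrite doubleS.
Qed.

Fixpoint sddecode (s : seq bool) : option (seq bool * seq bool) :=
  match s with
  | b1 :: b2 :: r =>
    if b1 == b2 then
      if sddecode r is Some (bs, u) then Some (b1 :: bs, u) else None
    else if b2 && ~~ b1 then Some ([::], r) else None
  | _ => None
  end.

Lemma sddecode_sdcode x u : sddecode (sdcode x ++ u) = Some (fixbits (bitlen x) x, u).
Proof. by rewrite /sdcode -catA; elim: (fixbits _ _) => //= b s ->; rewrite eqxx. Qed.

Lemma sddecode_cat s z bs u :
  sddecode s = Some (bs, u) -> sddecode (s ++ z) = Some (bs, u ++ z).
Proof.
have [n] := ubnP (size s); elim: n s bs u => // n IH [|b1 [|b2 r]] // bs u /= lt_rn.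
case: eqP => _; last by case: (b2 && ~~ b1) => // -[<- <-].
case dec_r: (sddecode r) => [[bs' u']|] // [<- <-].
by rewrite (IH r _ _ _ dec_r) // ltnW.
Qed.

Definition dc_code (t a b : nat) : seq bool := sdcode t ++ sdcode a ++ sdcode b.

Definition dc_decode (s : seq bool) : option (nat * nat * nat * seq bool) :=
  if sddecode s is Some (t, s1) then
  if sddecode s1 is Some (a, s2) then
  if sddecode s2 is Some (b, s3) then Some (bin_val t, bin_val a, bin_val b, s3)
  else None else None else None.

Lemma dc_wordE t a b y : dc_word t a b y = dc_code t a b ++ y.
Proof. by rewrite /dc_word /dc_code !catA. Qed.

Lemma dc_decode_code t a b u : dc_decode (dc_code t a b ++ u) = Some (t, a, b, u).
Proof.
by rewrite -dc_wordE /dc_decode /dc_word !sddecode_sdcode !fixbitsK ?ltn_bitlen.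
Qed.

Lemma dc_decode_cat s z x u : dc_decode s = Some (x, u) -> dc_decode (s ++ z) = Some (x, u ++ z).
Proof.
rewrite /dc_decode; case dec_t: (sddecode s) => [[t s1]|] //.
case dec_a: (sddecode s1) => [[a s2]|] //; case dec_b: (sddecode s2) => [[b s3]|] //.
by rewrite (sddecode_cat z dec_t) (sddecode_cat z dec_a) (sddecode_cat z dec_b) => -[<- <-].
Qed.

Lemma size_dc_code t a b B : t < B -> a < B -> b < B ->
  size (dc_code t a b) <= 3 * (bitlen B).*2.+2.
Proof.
have le_sd x : x < B -> size (sdcode x) <= (bitlen B).*2.+2.
  by move=> /ltnW /(leq_trunc_log 2); rewrite size_sdcode /bitlen; lia.
move=> /le_sd lt_t /le_sd lt_a /le_sd lt_b.
by rewrite /dc_code (size_cat (sdcode t)) (size_cat (sdcode a)); lia.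
Qed.

(** * Constant-time decision of prefix properties *)

Definition view (w : seq bool) (i : nat) : option bool :=
  if i < size w then Some (nth false w i) else None.

Definition prefix_view (w : seq bool) (n : nat) : seq (option bool) :=
  [seq view w i | i <- iota 0 n].

Lemma somes_prefix_view w m n :
  somes_prefix [seq view w i | i <- iota m n] = take n (drop m w).
Proof.
elim: n m => [|n IHn] m /=; first by rewrite take0.
rewrite /view; case: ltnP => [lt_mw|le_wm]; last by rewrite drop_oversize.
by rewrite IHn (drop_nth false lt_mw).
Qed.

Lemma somes_prefix_map s : somes_prefix (map Some s) = s.
Proof. by elim: s => //= b s ->. Qed.

Lemma set_nth_take_drop T (x0 : T) (s old : seq T) j : j < size s ->
  set_nth x0 (take j s ++ drop j old) j (nth x0 s j) = take j.+1 s ++ drop j.+1 old.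
Proof.
move=> lt_js; have size_sj : size (take j s) = j by rewrite size_take lt_js.
rewrite set_nthE take_cat drop_cat size_cat size_sj ltnn subnn take0 cats0 drop_drop.
rewrite (ltnNge j.+1) leqnSn subSnn add1n (take_nth x0 lt_js) -cats1 -catA.
rewrite -{1}[j]addn0 ltn_add2l size_drop subn_gt0 -catA.
case: ltnP => [//|le_oj]; rewrite !drop_oversize ?(leq_trans le_oj) //.
by rewrite cats0 (eqnP le_oj) addn0 subnn.
Qed.

Lemma set_nth_nth T (x0 : T) s j : j < size s -> set_nth x0 s j (nth x0 s j) = s.
Proof. by move=> lt_js; rewrite set_nthE lt_js -drop_nth // cat_take_drop. Qed.

Lemma rrun_halted (M : ratm) w s t : s <= t -> rhalted (rrun M w s) ->
  rrun M w t = rrun M w s.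
Proof.
move=> /subnK <-; rewrite /rrun iterD; move: (iter s _ _) => c halted_c.
by elim: (t - s) => //= n ->; rewrite /rstep halted_c.
Qed.

Inductive phase := Write | Read | Back.

Definition phase_code (x : phase) : 'I_3 :=
  match x with Write => inord 0 | Read => inord 1 | Back => inord 2 end.
Definition phase_decode (i : 'I_3) : phase :=
  match val i with 0 => Write | 1 => Read | _ => Back end.
Lemma phase_codeK : cancel phase_code phase_decode.
Proof. by case; rewrite /phase_decode /= inordK. Qed.
HB.instance Definition _ := Finite.copy phase (can_type phase_codeK).

Section PrefixMachine.
Variables (K : nat) (dec : seq (option bool) -> bool).

Local Notation W := (bitlen K).
Local Notation addr p := (fixbits W p).
Local Notation addr_tape p := (map Some (addr p)).

Definition pm_history := {ffun 'I_K.+1 -> option bool}.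
(* In the active state (phase, p, j, h) the machine handles address p, its index head
   is on cell j, and h records the input symbols at the positions < p; inr b halts
   with answer b. *)
Definition pm_state := ((phase * 'I_K.+1 * 'I_W.+1 * pm_history) + bool)%type.

Definition pm_active (ph : phase) (p j : nat) (h : pm_history) : pm_state :=
  inl (ph, inord p, inord j, h).

Definition pm_next (s : pm_state) (inp r : option bool) : pm_state * option bool * move :=
  match s with
  | inr _ => (s, r, MStay)
  | inl (ph, p, j, h) =>
    match ph with
    (* The last address bit is written without moving, so the head never leaves the
       address and writing back the scanned symbol never extends the tape. *)
    | Write =>
      if j.+1 < W then (pm_active Write p j.+1 h, Some (nth false (addr p) j), MRight)
      else (pm_active Read p j h, Some (nth false (addr p) j), MStay)
    | Read =>
      let h' := [ffun i => if i == p then inp else h i] in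
      if p == K :> nat then (inr (dec [seq h' i | i <- enum 'I_K.+1]), r, MStay)
      else (pm_active Back p j h', r, MStay)
    | Back =>
      if j == 0 :> nat then (pm_active Write p.+1 0 h, r, MStay)
      else (pm_active Back p j.-1 h, r, MLeft)
    end
  end.

Definition pm_delta (q : 'I_#|{: pm_state}|) (inp : option bool)
    (rd : {ffun 'I_1 -> option bool}) :
    'I_#|{: pm_state}| * {ffun 'I_1 -> option bool} * {ffun 'I_1 -> move} :=
  let: (s', wr, mv) := pm_next (enum_val q) inp (rd ord0) in
  (enum_rank s', [ffun _ => wr], [ffun _ => mv]).

Definition prefix_machine : ratm :=
  @RATM #|{: pm_state}| 0 (enum_rank (pm_active Write 0 0 [ffun _ => None]))
    (enum_rank (inr true)) (enum_rank (inr false)) pm_delta.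

Variable w : seq bool.

Definition pm_conf (c : rconf prefix_machine) (s : pm_state) tp hd : Prop :=
  [/\ cstate c = enum_rank s, ctapes c ord0 = tp & cheads c ord0 = hd].

Lemma pm_step c x tp hd s' wr mv : pm_conf c (inl x) tp hd ->
  pm_next (inl x) (view w (bin_val (somes_prefix tp))) (nth None tp hd) = (s', wr, mv) ->
  pm_conf (rstep w c) s' (set_nth None tp hd wr) (move_head mv hd).
Proof.
case: c => q tps hds [q_def tp_def hd_def] next_x; rewrite /= in q_def tp_def hd_def.
rewrite /rstep /rhalted /= q_def !(inj_eq enum_rank_inj) /= /pm_delta enum_rankK ffunE.
by rewrite tp_def hd_def -/(view w _) next_x /pm_conf /= !ffunE tp_def hd_def.
Qed.

Definition pm_hist (p : nat) : pm_history := [ffun i : 'I_K.+1 => if i < p then view w i else None].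

Lemma pm_hist_read p : p <= K ->
  [ffun i : 'I_K.+1 => if i == inord p then view w p else pm_hist p i] = pm_hist p.+1.
Proof.
move=> le_pK; apply/ffunP => i; rewrite !ffunE.
case: (i =P inord p) => [->|ne_ip]; first by rewrite inordK ?ltnSn.
rewrite [in RHS]ltnS [in RHS]leq_eqVlt; case: eqP => // eq_ip; case: ne_ip.
by apply: val_inj; rewrite /= inordK.
Qed.

Lemma bin_val_addr_tape p : p <= K -> bin_val (somes_prefix (addr_tape p)) = p.
Proof.
by move=> le_pK; rewrite somes_prefix_map fixbitsK // (leq_ltn_trans le_pK) ?ltn_bitlen.
Qed.

Definition write_tape p old j := take j (addr_tape p) ++ drop j old.

Lemma write_tape0 p old : write_tape p old 0 = old.
Proof. by rewrite /write_tape take0 drop0. Qed.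

Lemma write_tapeS p old j : j < W ->
  set_nth None (write_tape p old j) j (Some (nth false (addr p) j)) = write_tape p old j.+1.
Proof.
move=> lt_jW; rewrite /write_tape -(nth_map false None) ?size_fixbits //.
by rewrite set_nth_take_drop ?size_map ?size_iota.
Qed.

Lemma write_tape_full p old : size old <= W -> write_tape p old W = addr_tape p.
Proof.
by move=> le_oW; rewrite /write_tape take_oversize ?drop_oversize ?cats0 ?size_map ?size_iota.
Qed.

Lemma pm_write_phase p h old : p <= K -> size old <= W ->
  forall k j c, j + k.+1 = W -> pm_conf c (pm_active Write p j h) (write_tape p old j) j ->
  pm_conf (iter k.+1 (rstep w) c) (pm_active Read p W.-1 h) (addr_tape p) W.-1.
Proof.
move=> le_pK le_oW; elim=> [|k IHk] j c jkW conf_c.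
  have lt_jW : j < W by lia.
  have -> : W.-1 = j by lia.
  rewrite -(write_tape_full p le_oW) -[X in pm_conf _ _ _ X]/(move_head MStay j).
  have -> : W = j.+1 by lia.
  rewrite -write_tapeS //; apply: (pm_step conf_c).
  by rewrite /pm_next /= !inordK ?ifF //; lia.
rewrite iterSr; apply: (IHk j.+1); first by lia.
rewrite -write_tapeS -?[X in pm_conf _ _ _ X]/(move_head MRight j); last by lia.
apply: (pm_step conf_c); rewrite /pm_next /= !inordK ?ifT //; lia.
Qed.

Lemma pm_read_step c p : p < K ->
  pm_conf c (pm_active Read p W.-1 (pm_hist p)) (addr_tape p) W.-1 ->
  pm_conf (rstep w c) (pm_active Back p W.-1 (pm_hist p.+1)) (addr_tape p) W.-1.
Proof.
move=> lt_pK conf_c; have lt_W1W : W.-1 < size (addr_tape p) by rewrite size_map size_fixbits.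
rewrite -[X in pm_conf _ _ X](set_nth_nth None lt_W1W).
rewrite -[X in pm_conf _ _ _ X]/(move_head MStay W.-1).
apply: (pm_step conf_c); rewrite /pm_next /= !inordK ?bin_val_addr_tape ?pm_hist_read ?ifF //; lia.
Qed.

Lemma pm_read_last c :
  pm_conf c (pm_active Read K W.-1 (pm_hist K)) (addr_tape K) W.-1 ->
  cstate (rstep w c) = enum_rank (inr (dec (prefix_view w K.+1)) : pm_state).
Proof.
move=> conf_c; set tp := addr_tape K.
have next_K : pm_next (pm_active Read K W.-1 (pm_hist K))
    (view w (bin_val (somes_prefix tp))) (nth None tp W.-1) =
  (inr (dec (prefix_view w K.+1)), nth None tp W.-1, MStay).
  rewrite /pm_next /= !inordK ?bin_val_addr_tape ?pm_hist_read ?eqxx //.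
  congr (inr (dec _), _, _); rewrite /prefix_view -val_enum_ord -map_comp.
  by apply: eq_map => i; rewrite /= ffunE ltn_ord.
by case: (pm_step conf_c next_K).
Qed.

Lemma pm_back_phase p h : p < K -> forall j c, j < W ->
  pm_conf c (pm_active Back p j h) (addr_tape p) j ->
  pm_conf (iter j.+1 (rstep w) c) (pm_active Write p.+1 0 h) (addr_tape p) 0.
Proof.
move=> lt_pK; elim=> [|j IHj] c lt_jW conf_c.
  have lt_0W : 0 < size (addr_tape p) by rewrite size_map size_fixbits.
  rewrite -[X in pm_conf _ _ X](set_nth_nth None lt_0W) -[X in pm_conf _ _ _ X]/(move_head MStay 0).
  by apply: (pm_step conf_c); rewrite /pm_next /= !inordK //; lia.
rewrite iterSr; apply: IHj; first exact: ltnW.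
have lt_jS : j.+1 < size (addr_tape p) by rewrite size_map size_fixbits.
rewrite -[X in pm_conf _ _ X](set_nth_nth None lt_jS).
rewrite -[X in pm_conf _ _ _ X]/(move_head MLeft j.+1).
by apply: (pm_step conf_c); rewrite /pm_next /= !inordK //; lia.
Qed.

Lemma pm_cycle c p old : p < K -> size old <= W ->
  pm_conf c (pm_active Write p 0 (pm_hist p)) old 0 ->
  pm_conf (iter W.*2.+1 (rstep w) c) (pm_active Write p.+1 0 (pm_hist p.+1)) (addr_tape p) 0.
Proof.
move=> lt_pK le_oW; rewrite -{1}(write_tape0 p old) => conf_c.
have conf_r := pm_write_phase (k := W.-1) (j := 0) (ltnW lt_pK) le_oW erefl conf_c.
have conf_w := pm_back_phase lt_pK (ltnSn _) (pm_read_step lt_pK conf_r).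
by rewrite -addnn -addSn iterD iterSr; exact: conf_w.
Qed.

Lemma pm_cycles p : p <= K -> exists2 old, size old <= W &
  pm_conf (rrun prefix_machine w (W.*2.+1 * p)) (pm_active Write p 0 (pm_hist p)) old 0.
Proof.
elim: p => [|p IHp] lt_pK.
  exists [::]; rewrite // muln0; split=> //=; congr (enum_rank (pm_active _ _ _ _)).
have [old le_oW conf_p] := IHp (ltnW lt_pK).
exists (addr_tape p); first by rewrite size_map size_fixbits.
by rewrite /rrun mulnS iterD; apply: pm_cycle le_oW conf_p.
Qed.

Definition pm_time := (W.*2.+1 * K + W).+1.

Lemma pm_final : cstate (rrun prefix_machine w pm_time) =
  enum_rank (inr (dec (prefix_view w K.+1)) : pm_state).
Proof.
have [old le_oW conf_K] := pm_cycles (leqnn K).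
rewrite -(write_tape0 K old) in conf_K.
have conf_r := pm_write_phase (k := W.-1) (j := 0) (leqnn K) le_oW erefl conf_K.
by rewrite /pm_time /rrun iterS addnC iterD; apply: pm_read_last conf_r.
Qed.

Lemma prefix_machine_decides T : pm_time <= T ->
  decides_within prefix_machine w T (dec (prefix_view w K.+1)).
Proof.
have halted : rhalted (rrun prefix_machine w pm_time).
  by rewrite /rhalted pm_final /=; case: (dec _); rewrite eqxx ?orbT.
move=> le_time; rewrite /decides_within (rrun_halted le_time halted) pm_final.
by split=> //=; split=> [/enum_rank_inj [] | ->].
Qed.

End PrefixMachine.

Lemma prefix_decidable_constant_time K (dec : seq (option bool) -> bool) :
  exists (M : ratm) (c : nat), forall w k,
    decides_within M w (c * k.+1) (dec (prefix_view w K.+1)).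
Proof.
exists (prefix_machine K dec), (pm_time K) => w k.
by apply: prefix_machine_decides; rewrite leq_pmulr.
Qed.

(** * Uniformity of circuit families with two members *)

Section BoundedDirectConnection.
Variables (D : bool -> mcircuit) (B : nat).
Hypothesis dc_bounded :
  forall big tag a b, dc_holds (D big) tag a b -> [&& tag < B, a < B & b < B].

Definition dc_decide (hs : seq (option bool)) : bool :=
  if dc_decode (somes_prefix hs) is Some (tag, a, b, y)
  then dc_holds (D (1 < size y)) tag a b else false.

Local Notation code_bound := (3 * (bitlen B).*2.+2).

Lemma dc_holds_code_bound big tag a b :
  dc_holds (D big) tag a b -> size (dc_code tag a b) <= code_bound.
Proof. by case/dc_bounded/and3P; apply: size_dc_code. Qed.

Lemma dc_decide_prefix tag a b y :
  dc_decide (prefix_view (dc_word tag a b y) code_bound.+2) = dc_holds (D (1 < size y)) tag a b.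
Proof.
rewrite /dc_decide somes_prefix_view drop0 dc_wordE.
have [le_code|lt_code] := leqP (size (dc_code tag a b)) code_bound.
  rewrite (take_cat _ (dc_code tag a b)) ifN; last by rewrite -leqNgt; lia.
  rewrite dc_decode_code; congr (dc_holds (D _) _ _ _).
  by rewrite size_take; case: ifP => //; lia.
have no_dc big : dc_holds (D big) tag a b = false.
  by apply/negbTE/negP => /dc_holds_code_bound; rewrite leqNgt lt_code.
case dec_take: dc_decode => [[[[tag' a'] b'] y']|]; rewrite ?no_dc //.
have := dc_decode_cat (drop code_bound.+2 (dc_code tag a b ++ y)) dec_take.
by rewrite cat_take_drop dc_decode_code => -[<- <- <- _]; rewrite no_dc.
Qed.

Lemma dlogtime_uniform_bounded : dlogtime_uniform (fun n => D (1 < n)).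
Proof.
have [M [c decides]] := prefix_decidable_constant_time code_bound.+1 dc_decide.
by exists M, c => tag a b y; rewrite -dc_decide_prefix; apply: decides.
Qed.

End BoundedDirectConnection.

Definition const_circuit : circuit :=
  Circuit 2 (fun g => if g == 0 then GConst false else GConst true) (fun _ => [::]).

(* Gate 0 is false and gate 1 true: every output is validated by gate 1 and its bit is
   read off gate b. *)
Definition const_mcircuit (s : seq bool) : mcircuit :=
  MCircuit const_circuit [seq (1, nat_of_bool b) | b <- s].

Lemma mc_output_const s w : mc_output (const_mcircuit s) w = s.
Proof. by rewrite /mc_output /=; elim: s => //= -[] s ->. Qed.

Lemma dc_holds_const s tag a b :
  dc_holds (const_mcircuit s) tag a b -> [&& tag < 4, a < (size s).+2 & b < 5].
Proof.
case: tag => [|[|[|[|tag]]]] //=; rewrite ?size_map.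
- by case/andP=> lt_a2 /eqP <-; rewrite (leq_trans lt_a2) //; case: (a == 0).
- by case/andP=> _; rewrite in_nil.
- by case/andP=> lt_as /eqP <-; rewrite (nth_map false) //= (ltn_trans lt_as (leqnSn _)).
- case/andP=> lt_as /eqP <-; rewrite (nth_map false) //= (ltn_trans lt_as (leqnSn _)).
  by case: nth.
Qed.

Lemma FAC0_of_length_gt1 (s : bool -> seq bool) B :
  (forall big, size (s big) <= B) -> FAC0 (fun w => s (1 < size w)).
Proof.
move=> le_sB; exists (fun n => const_mcircuit (s (1 < n))), B.+2, 0.
split; [|split; [|split; [|split; [|split; [|split]]]]].
- by move=> n [|[|g]] // _; split.
- by move=> n; apply: leq_trans (leq_addl _ _).
- move=> n; rewrite /= size_map; apply: leq_trans (leq_addl _ _).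
  by rewrite (leq_trans (le_sB _)) // -addn2 leq_addr.
- by move=> n; apply/allP => _ /mapP [[] _ ->].
- by move=> n [|[|g]].
- apply: (@dlogtime_uniform_bounded (fun big => const_mcircuit (s big)) (B + 5)) => big tag a b.
  by move/dc_holds_const/and3P => [lt_t lt_a lt_b]; have := le_sB big; lia.
- by move=> w; rewrite mc_output_const.
Qed.

(** * Or circuits versus And circuits *)

Definition or01 (w : seq bool) : Prop := (1 < size w) && (nth false w 0 || nth false w 1).

Definition or2_circuit : circuit * nat :=
  (Circuit 3 (fun g => match g with 0 => GInput 0 | 1 => GInput 1 | _ => GOr end)
     (fun g => if g == 2 then [:: 0; 1] else [::]), 2).

Definition or_false_circuit : circuit * nat :=
  (Circuit 2 (fun g => if g == 0 then GConst false else GOr)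
     (fun g => if g == 1 then [:: 0] else [::]), 1).

Definition or01_circuit (big : bool) : circuit * nat :=
  if big then or2_circuit else or_false_circuit.

Lemma or01_circuit_wf n :
  let Co := or01_circuit (1 < n) in wf_circuit n Co.1 /\ Co.2 < csize Co.1 /\ is_or_circuit Co.
Proof.
rewrite /or01_circuit; case: ifP => lt_1n /=.
  split; last by split=> //; split=> // -[|[|[|g]]].
  move=> [|[|[|g]]] // _; split=> //=; [split=> //; exact: ltnW | by case=> [|[|p]]].
split; last by split=> //; split=> // -[|[|g]].
by move=> [|[|g]] // _; split=> // -[|p].
Qed.

Lemma or01_circuit_correct w :
  let Co := or01_circuit (1 < size w) in gate_val Co.1 w Co.2 = true <-> or01 w.
Proof. by rewrite /or01_circuit /or01 /gate_val; case: ifP => //= _; rewrite orbF. Qed.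

Lemma size_enc_or01_circuit big : size (enc_circuit (or01_circuit big)) <= 34.
Proof. by case: big; vm_compute. Qed.

Lemma or01_uniform_Or : uniform_FAC0_Or or01.
Proof.
exists (fun n => or01_circuit (1 < n)); split; first exact: or01_circuit_wf.
split; first exact: or01_circuit_correct.
exists (fun w => enc_circuit (or01_circuit (1 < size w))); split.
  exact: FAC0_of_length_gt1 size_enc_or01_circuit.
by move=> n; rewrite size_nseq.
Qed.

Definition meet_word (w1 w2 : seq bool) : seq bool := [seq x.1 && x.2 | x <- zip w1 w2].

Lemma nth_meet_word w1 w2 i : nth false (meet_word w1 w2) i = nth false w1 i && nth false w2 i.
Proof.
elim: w1 w2 i => [|x1 w1 IHw] [|x2 w2] [|i] //=; rewrite ?nth_nil ?andbF //.
by rewrite IHw.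
Qed.

Lemma and_circuit_meet n (Co : circuit * nat) w1 w2 g :
  wf_circuit n Co.1 -> is_and_circuit Co -> g < csize Co.1 ->
  gate_val Co.1 (meet_word w1 w2) g = gate_val Co.1 w1 g && gate_val Co.1 w2 g.
Proof.
case: Co => C out /= wf_C [and_C _] lt_gC; rewrite /gate_val; move: (g.+1) => f.
elim: f g lt_gC => [|f IHf] g lt_gC //=.
have [lt_pred gate_g] := wf_C g lt_gC; move: gate_g (and_C g lt_gC).
case: (ctype C g) => // [_ _ | b _ _ | i _ _]; rewrite ?andbb ?nth_meet_word //.
by rewrite -all_predI; apply: eq_in_all => p /lt_pred lt_pg; rewrite /= IHf // (ltn_trans lt_pg).
Qed.

Lemma or01_not_uniform_And : ~ uniform_FAC0_And or01.
Proof.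
case=> C [C_ok [C_decides _]]; have [wf_C [lt_out and_C]] := C_ok 2.
have := and_circuit_meet [:: true; false] [:: false; true] wf_C and_C lt_out.
have [_ accepts10] := C_decides [:: true; false]; have [_ accepts01] := C_decides [:: false; true].
have [rejects00 _] := C_decides [:: false; false].
by rewrite /= accepts10 ?accepts01 // => /rejects00.
Qed.

Theorem lemma4 :
  ~ (forall L : seq bool -> Prop, uniform_FAC0_Or L <-> uniform_FAC0_And L).
Proof. by move=> same_class; apply/or01_not_uniform_And/same_class/or01_uniform_Or. Qed.
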